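(* Let $m\ge n$ and let $K_1,\dots,K_m\subseteq\mathbb{R}^n$ be nontrivial (i.e. $\neq\{o\}$) pointed convex cones. If $\bigcap_{j\in J}K_j\neq\{o\}$ for every $J\subseteq\{1,\dots,m\}$ with $\operatorname{card}J=n$, and $\bigcup_{j\in J}K_j\neq\mathbb{R}^n$ for every $J\subseteq\{1,\dots,m\}$ with $\operatorname{card}J=n+1$, then $\bigcap_{i=1}^mK_i\neq\{o\}$ and $\bigcup_{i=1}^mK_i\neq\mathbb{R}^n$.
   Context: $n\ge2$; $o$ is the zero vector; a cone $K$ is pointed if $K\cap(-K)=\{o\}$. *)

From HB Require Import structures.
From mathcomp Require Import all_boot all_order all_algebra.
From mathcomp Require Import classical_sets reals.
Set Implicit Arguments. Unset Strict Implicit. Unset Printing Implicit Defensive.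
Import Order.TTheory GRing.Theory Num.Theory.
Local Open Scope ring_scope.
Local Open Scope classical_set_scope.

Section Cones.
Variables (R : realType) (n : nat).

Definition is_cone (K : set 'rV[R]_n) : Prop :=
  K !=set0 /\ forall (a : R) (x : 'rV[R]_n), 0 <= a -> K x -> K (a *: x).

Definition is_convex (K : set 'rV[R]_n) : Prop :=
  forall (x y : 'rV[R]_n) (t : R), K x -> K y -> 0 <= t -> t <= 1 ->
    K ((1 - t) *: x + t *: y).

Definition convex_cone (K : set 'rV[R]_n) : Prop := is_cone K /\ is_convex K.

Definition pointed (K : set 'rV[R]_n) : Prop :=
  K `&` [set x | K (- x)] = [set 0].

Definition nontrivial (K : set 'rV[R]_n) : Prop := K <> [set 0].

End Cones.

(* We prove by induction on d that every family S of n + d cones has a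
   common nonzero vector.  The base case d = 0 is the intersection hypothesis.
   For the step pick n + 1 distinct indices g_0, ..., g_n in S; by induction
   there is a nonzero v_i common to all cones of S except K_(g i), and by the
   union hypothesis a vector x lying in none of the K_(g i).  The n + 1
   vectors v_i of R^n satisfy a nontrivial linear relation:
   - if its coefficients have mixed signs, a Radon-type argument (using
     pointedness) produces the desired common nonzero vector;
   - if all its coefficients are positive, x cannot lie in the span of the
     v_i (shifting coefficients along the relation would put x in some
     K_(g i)), so a relation among v_0, ..., v_(n-1), x has a zero coefficient
     at x, and is thus a mixed-sign relation among the v_i.
   Taking S to be all m indices yields a nonzero w in every cone, so the
   intersection is not {o}; by pointedness -w lies in no cone, so the union
   is not R^n. *)
From HB Require Import structures.
From mathcomp Require Import all_boot all_order all_algebra.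
From mathcomp Require Import classical_sets reals boolp.
From mathcomp Require Import lra.
Import Order.TTheory GRing.Theory Num.Theory.
Local Open Scope ring_scope.
Local Open Scope classical_set_scope.

Lemma exists_linear_relation {F : fieldType} {p n : nat}
    (v : 'I_p -> 'rV[F]_n) :
  (n < p)%N ->
  exists2 l : 'I_p -> F, \sum_i l i *: v i = 0 & exists i, l i != 0.
Proof.
move=> np; pose A := \matrix_(i < p) v i.
have notfree : ~~ row_free A.
  by rewrite -row_leq_rank -ltnNge (leq_ltn_trans (rank_leq_col A) np).
have : kermx A != 0 by rewrite kermx_eq0.
case/eqP/matrixP/existsNP => i /existsNP [j /eqP].
rewrite [X in _ != X]mxE => kerij.
exists (fun k => kermx A i k); last by exists j.
have := mulmx_sum_row (row i (kermx A)) A.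
rewrite -row_mul mulmx_ker row0 => kernel_row.
rewrite [RHS]kernel_row; apply: eq_bigr => k _; by rewrite !mxE rowK.
Qed.

Lemma exists_injection_into (T : finType) (S : {set T}) (p : nat) :
  (p < #|S|)%N -> exists g : 'I_p.+1 -> T, injective g /\ forall i, g i \in S.
Proof.
move=> pS; have [x0 x0S] : exists x0, x0 \in S.
  by apply/set0Pn; rewrite -card_gt0 (leq_trans _ pS).
have ltS (i : 'I_p.+1) : (i < size (enum S))%N.
  by rewrite -cardE (leq_trans (ltn_ord i)).
exists (fun i => nth x0 (enum S) i); split.
  by move=> i k /eqP; rewrite nth_uniq ?enum_uniq // => /eqP /val_inj.
by move=> i; rewrite -mem_enum mem_nth.
Qed.

Section ConvexCones.
Context {R : realType} {n : nat}.

Lemma cone_zero {K : set 'rV[R]_n} : convex_cone K -> K 0.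
Proof. by case=> [[[z Kz] scaleK] _]; rewrite -(scale0r z); apply: scaleK. Qed.

(* A convex cone is closed under addition: x + y = 2 * (x/2 + y/2). *)
Lemma cone_add {K : set 'rV[R]_n} {x y : 'rV[R]_n} :
  convex_cone K -> K x -> K y -> K (x + y).
Proof.
case=> [[_ scaleK] convK] Kx Ky.
have half_ge0 : 0 <= (2%:R : R)^-1 by rewrite invr_ge0.
have half_le1 : (2%:R : R)^-1 <= 1 by rewrite invf_le1 // ler1n.
have := scaleK 2%:R _ (ler0n _ _) (convK x y _ Kx Ky half_ge0 half_le1).
have -> : 1 - (2%:R : R)^-1 = (2%:R)^-1.
  by rewrite [X in X - _](splitr 1) mul1r addrK.
by rewrite -scalerDr scalerA mulfV ?pnatr_eq0 // scale1r.
Qed.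

Lemma cone_conic_comb {K : set 'rV[R]_n} {I : finType} {P : pred I}
    {c : I -> R} {v : I -> 'rV[R]_n} :
  convex_cone K -> (forall i, P i -> 0 <= c i /\ K (v i)) ->
  K (\sum_(i | P i) c i *: v i).
Proof.
move=> coneK Hv; apply: (big_ind K) => //; first exact: cone_zero.
  by move=> x y; apply: cone_add.
by move=> i /Hv [c0 Kv]; case: coneK => [[_ scaleK] _]; apply: scaleK.
Qed.

Lemma pointed_opp_eq0 {K : set 'rV[R]_n} {x : 'rV[R]_n} :
  pointed K -> K x -> K (- x) -> x = 0.
Proof.
by move=> ptK Kx Kxn; have := congr1 (fun S : set _ => S x) ptK => /= <-.
Qed.

Lemma pointed_conic_comb_eq0 {K : set 'rV[R]_n} {I : finType} {P : pred I}
    {c : I -> R} {v : I -> 'rV[R]_n} :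
  convex_cone K -> pointed K -> (forall i, P i -> 0 < c i /\ K (v i)) ->
  \sum_(i | P i) c i *: v i = 0 -> forall i, P i -> v i = 0.
Proof.
move=> coneK ptK Hv sum0 i Pi; have [ci_gt0 Kvi] := Hv i Pi.
apply: (pointed_opp_eq0 ptK Kvi).
move: sum0; rewrite (bigD1 i) //= => /eqP.
rewrite addrC addr_eq0 => /eqP rest.
have -> : - v i = (c i)^-1 *: \sum_(k | P k && (k != i)) c k *: v k.
  by rewrite rest scalerN scalerA mulVf ?gt_eqF // scale1r.
rewrite scaler_sumr; under eq_bigr do rewrite scalerA.
apply: cone_conic_comb => // k /andP [/Hv [ck_gt0 Kvk] _].
by split => //; rewrite mulr_ge0 ?invr_ge0 ?ltW.
Qed.

End ConvexCones.

Definition mixed_signs {R : realDomainType} {p : nat} (l : 'I_p -> R) : Prop :=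
  (exists i, 0 < l i) /\ (exists j, l j <= 0).

Lemma relation_sign_cases {R : realDomainType} {n p : nat}
    {v : 'I_p -> 'rV[R]_n}
    {l : 'I_p -> R} :
  \sum_i l i *: v i = 0 -> (exists i, l i != 0) ->
  (exists2 l', \sum_i l' i *: v i = 0 & mixed_signs l') \/
  ((exists2 l', \sum_i l' i *: v i = 0 & forall i, 0 < l' i) /\
   forall i, l i != 0).
Proof.
move=> rel [i0 li0].
have relN : \sum_i (- l i) *: v i = 0.
  by under eq_bigr do rewrite scaleNr; rewrite sumrN rel oppr0.
have [[i li_gt0] | no_pos] := pselect (exists i, 0 < l i).
  have [all_pos | /existsNP [j /negP lj_le0]] :=
    pselect (forall i, 0 < l i); last first.
    by left; exists l => //; split; [exists i | exists j; rewrite leNgt].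
  by right; split; [exists l | move=> k; rewrite gt_eqF].
have l_le0 k : l k <= 0.
  by rewrite leNgt; apply/negP => lk; apply: no_pos; exists k.
have [all_neg | /existsNP [j /negP lj_ge0]] :=
  pselect (forall i, l i < 0); last first.
  left; exists (fun i => - l i) => //; split.
    by exists i0; rewrite oppr_gt0 lt_neqAle li0 l_le0.
  by exists j; rewrite oppr_le0 leNgt.
right; split; last by move=> k; rewrite lt_eqF.
by exists (fun i => - l i) => // k; rewrite oppr_gt0.
Qed.

Section ConeFamily.
Context {R : realType} {n m : nat} {K : 'I_m -> set 'rV[R]_n}.
Hypothesis coneK : forall i, convex_cone (K i) /\ pointed (K i).

(* A mixed-sign relation among the v_i splits into two equal
   nonnegative combinations, which give a common nonzero vector of S. *)
Lemma radon_common_vector {p : nat} {S : {set 'I_m}} {g : 'I_p -> 'I_m}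
    {v : 'I_p -> 'rV[R]_n} {l : 'I_p -> R} :
  injective g -> (forall i, g i \in S) -> (forall i, v i != 0) ->
  (forall i j, j \in S -> j != g i -> K j (v i)) ->
  \sum_i l i *: v i = 0 -> mixed_signs l ->
  exists2 w, w != 0 & forall j, j \in S -> K j w.
Proof.
move=> g_inj gS v_neq0 Kv rel [[i0 li0_gt0] [j0 lj0_le0]].
set w := \sum_(i | 0 < l i) l i *: v i.
have w_neg : w = \sum_(i | ~~ (0 < l i)) (- l i) *: v i.
  move: rel; rewrite (bigID (fun i => 0 < l i)) /= -/w => /eqP.
  rewrite addr_eq0 => /eqP ->.
  by rewrite -sumrN; apply: eq_bigr => i _; rewrite scaleNr.
have g_pos_neg i j : 0 < l i -> l j <= 0 -> g j != g i.
  move=> li lj; rewrite (inj_eq g_inj).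
  by apply: contraTneq li => ji; rewrite -leNgt -ji.
exists w.
  apply: contra_neq (v_neq0 i0) => w0.
  have [coneKj0 ptKj0] := coneK (g j0).
  apply: (pointed_conic_comb_eq0 coneKj0 ptKj0 _ w0) => //.
  by move=> i li; split => //; apply: Kv (gS j0) (g_pos_neg _ _ li lj0_le0).
move=> j jS; have [[i /andP [/eqP gij li]] | no_pos] :=
  pselect (exists i, (g i == j) && (0 < l i)).
  rewrite w_neg; apply: cone_conic_comb; first exact: (proj1 (coneK j)).
  move=> k lk; rewrite -leNgt in lk; split; first by rewrite oppr_ge0.
  by apply: Kv jS _; rewrite -gij eq_sym g_pos_neg.
apply: cone_conic_comb; first exact: (proj1 (coneK j)).
move=> k lk; split; first exact: ltW.
apply: Kv jS _; apply: contra_not_neq no_pos => ->.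
by exists k; rewrite eqxx lk.
Qed.

(* If the v_k (k != i) lie in K_(g i) and satisfy a positive relation, then
   every vector of their span lies in some K_(g i): shift the coefficients
   along the relation until one of them vanishes and the others are >= 0. *)
Lemma span_covered {p : nat} {g : 'I_p.+1 -> 'I_m} {v : 'I_p.+1 -> 'rV[R]_n}
    {l : 'I_p.+1 -> R} (c : 'I_p.+1 -> R) :
  (forall i k, k != i -> K (g i) (v k)) -> (forall i, 0 < l i) ->
  \sum_i l i *: v i = 0 -> exists i, K (g i) (\sum_i c i *: v i).
Proof.
move=> Kv l_gt0 rel.
case: (@arg_maxP _ _ _ ord0 xpredT (fun i => - c i / l i)) => // j _ jmax.
set t := - c j / l j.
have shift : \sum_i c i *: v i = \sum_i (c i + t * l i) *: v i.
  transitivity (\sum_i c i *: v i + t *: \sum_i l i *: v i).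
    by rewrite rel scaler0 addr0.
  rewrite scaler_sumr -big_split.
  by apply: eq_bigr => i _; rewrite scalerDl scalerA.
exists j; rewrite shift (bigD1 j) //= /t divfK ?gt_eqF // subrr scale0r add0r.
apply: cone_conic_comb; first exact: (proj1 (coneK _)).
move=> i ij; split; last exact: Kv.
have : - c i / l i <= t := jmax i isT.
by rewrite -/t ler_pdivrMr // => ?; lra.
Qed.

Lemma common_vector_step {S : {set 'I_m}} {g : 'I_n.+1 -> 'I_m}
    {v : 'I_n.+1 -> 'rV[R]_n} {x : 'rV[R]_n} :
  injective g -> (forall i, g i \in S) -> (forall i, v i != 0) ->
  (forall i j, j \in S -> j != g i -> K j (v i)) -> (forall i, ~ K (g i) x) ->
  exists2 w, w != 0 & forall j, j \in S -> K j w.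
Proof.
move=> g_inj gS v_neq0 Kv x_out.
have radon := radon_common_vector g_inj gS v_neq0 Kv.
have [l rel l_neq0] := exists_linear_relation v (ltnSn n).
have [[l' rel' mixed] | [[lpos relpos lpos_gt0] _]] :=
  relation_sign_cases rel l_neq0.
  exact: radon rel' mixed.
pose a := (ord_max : 'I_n.+1).
pose u i := if i == a then x else v i.
have [b relu b_neq0] := exists_linear_relation u (ltnSn n).
have [ba0 | ba_neq0] := eqVneq (b a) 0.
  have relv : \sum_i b i *: v i = 0.
    rewrite -[RHS]relu; apply: eq_bigr => i _; rewrite /u.
    by case: eqP => [->|//]; rewrite ba0 !scale0r.
  have [[b' relb' mixed] | [_ /(_ a)]] := relation_sign_cases relv b_neq0.
    exact: radon relb' mixed.
  by rewrite ba0 eqxx.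
pose c i := if i == a then 0 else - b i / b a.
have x_span : x = \sum_i c i *: v i.
  move: relu; rewrite (bigD1 a) //= /u eqxx => /eqP.
  rewrite addr_eq0 => /eqP bx.
  rewrite (bigD1 a) //= /c eqxx scale0r add0r -[x]scale1r -(mulVf ba_neq0).
  rewrite -scalerA bx scalerN -scaleNr scaler_sumr.
  by apply: eq_bigr => i ia; rewrite (negbTE ia) scalerA mulrC mulNr mulrN.
have v_in_other i k : k != i -> K (g i) (v k).
  by move=> ki; apply: Kv => //; rewrite (inj_eq g_inj) eq_sym.
have [i Kx] := span_covered c v_in_other lpos_gt0 relpos.
by case: (x_out i); rewrite x_span.
Qed.

Hypothesis common_n : forall J : {set 'I_m}, #|J| = n ->
  exists2 w, w != 0 & forall j, j \in J -> K j w.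
Hypothesis uncovered_n1 : forall J : {set 'I_m}, #|J| = n.+1 ->
  exists x, forall j, j \in J -> ~ K j x.

Lemma common_vector d (S : {set 'I_m}) :
  #|S| = (n + d)%N -> exists2 w, w != 0 & forall j, j \in S -> K j w.
Proof.
elim: d S => [|d IH] S cardS; first by apply: common_n; rewrite cardS addn0.
have [g [g_inj gS]] :
    exists g : 'I_n.+1 -> 'I_m, injective g /\ forall i, g i \in S.
  by apply: exists_injection_into; rewrite cardS addnS ltnS leq_addr.
have /fin_all_exists2 [v v_neq0 Kv] :
    forall i, exists2 w, w != 0 & forall j, j \in S :\ g i -> K j w.
  move=> i; apply: IH.
  by move: cardS; rewrite (cardsD1 (g i)) gS addnS add1n; case.
have [x x_out] :
    exists x, forall j, j \in (g @: [set: 'I_n.+1])%SET -> ~ K j x.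
  by apply: uncovered_n1; rewrite card_imset // cardsT card_ord.
apply: (common_vector_step g_inj gS v_neq0).
  by move=> i j jS jgi; apply: Kv; rewrite in_setD1 jgi jS.
by move=> i; apply: x_out; apply: imset_f; rewrite inE.
Qed.

End ConeFamily.

Lemma exists_nonzero_of_neq_set0 {V : zmodType} {A : set V} :
  A <> [set 0] -> A 0 -> exists2 w, w != 0 & A w.
Proof.
move=> A_neq A0; apply: contrapT => no_w; apply: A_neq.
apply/funext => y; apply/propext; split => [Ay|-> //].
by apply/eqP; apply: contrapT => /negP y_neq0; apply: no_w; exists y.
Qed.

Theorem mainTheorem13 (R : realType) (n m : nat) (K : 'I_m -> set 'rV[R]_n) :
  (2 <= n)%N -> (n <= m)%N ->
  (forall i, convex_cone (K i) /\ pointed (K i) /\ nontrivial (K i)) ->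
  (forall J : {set 'I_m}, #|J| = n ->
     [set x | forall j, j \in J -> K j x] <> [set 0]) ->
  (forall J : {set 'I_m}, #|J| = n.+1 ->
     [set x | exists2 j, j \in J & K j x] <> [set: 'rV[R]_n]) ->
  [set x | forall i, K i x] <> [set 0] /\
  [set x | exists i, K i x] <> [set: 'rV[R]_n].
Proof.
move=> _ nm hK hI hU.
have coneK i : convex_cone (K i) /\ pointed (K i) by case: (hK i) => ? [].
have common_n (J : {set 'I_m}) :
    #|J| = n -> exists2 w, w != 0 & forall j, j \in J -> K j w.
  move=> cardJ; apply: (exists_nonzero_of_neq_set0 (hI J cardJ)) => j _ /=.
  exact: cone_zero (proj1 (coneK j)).
have uncovered_n1 (J : {set 'I_m}) :
    #|J| = n.+1 -> exists x, forall j, j \in J -> ~ K j x.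
  move=> cardJ; have /eqP/setTPn [x x_out] := hU J cardJ.
  by exists x => j jJ Kjx; apply: x_out; exists j.
have [w w_neq0 Kw] : exists2 w, w != 0 & forall i, K i w.
  have card_all : #|[set: 'I_m]%SET| = (n + (m - n))%N.
    by rewrite cardsT card_ord subnKC.
  have [w w_neq0 Kw] :=
    common_vector coneK common_n uncovered_n1 (m - n) [set: 'I_m]%SET card_all.
  by exists w => // i; apply: Kw; rewrite inE.
split => [capE | cupE].
  have : [set x | forall i, K i x] w by [].
  by rewrite capE => /= w0; rewrite w0 eqxx in w_neq0.
have [i Kiw] : [set x | exists i, K i x] (- w) by rewrite cupE.
by move: w_neq0; rewrite (pointed_opp_eq0 (proj2 (coneK i)) (Kw i) Kiw) eqxx.
Qed.
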